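(* Let $\ket{\psi_1},\dots,\ket{\psi_d}\in\mathbb{C}^d\otimes\mathbb{C}^d$ be $d$ pairwise orthogonal maximally entangled states shared between Alice and Bob, each with probability $1/d$. Suppose Alice performs a measurement with Kraus operators $\{K_j\}$ and obtains outcome $\alpha$, producing post-measurement states $\ket{\psi_{i,\alpha}}=(K_\alpha\otimes\mathbb{1}_B)\ket{\psi_i}/\|(K_\alpha\otimes\mathbb{1}_B)\ket{\psi_i}\|$, and let $\rho^{(B)}_{\alpha}=\frac1d\sum_{i=1}^d\mathrm{Tr}_A\ket{\psi_{i,\alpha}}\bra{\psi_{i,\alpha}}$. If the states $\{\ket{\psi_{i,\alpha}}\}_{i=1}^d$ are perfectly distinguishable by LOCC, then $\rho^{(B)}_{\alpha}=\frac1d\mathbb{1}_d$ (maximally mixed).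
   Context: A maximally entangled state in $\mathbb{C}^d\otimes\mathbb{C}^d$ is a pure state whose reduced states are $\frac1d\mathbb{1}_d$. LOCC denotes local operations and classical communication between Alice and Bob. *)

(* Bipartite pure states on C^da (x) C^db are column vectors
   'cV_(da * db), the tensor (Kronecker) product being mathcomp-real-closed's
   [tensmx] (notation [A *t B]) with its index convention [mxtens_index]. *)
From HB Require Import structures.
From mathcomp Require Import all_boot all_order all_algebra.
From mathcomp Require Export mxtens.
Set Implicit Arguments. Unset Strict Implicit. Unset Printing Implicit Defensive.
Import Order.TTheory GRing.Theory Num.Theory.
Local Open Scope ring_scope.

Section QDefs.
Variable C : numClosedFieldType.

Definition adjmx {m n} (A : 'M[C]_(m, n)) : 'M[C]_(n, m) := (map_mx Num.conj A)^T.

Definition inner {n} (u v : 'cV[C]_n) : C := (adjmx u *m v) 0 0.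
Definition vnorm {n} (v : 'cV[C]_n) : C := sqrtC (inner v v).

Definition ketbra {n} (v : 'cV[C]_n) : 'M[C]_n := v *m adjmx v.

Definition ptraceA {da db} (rho : 'M[C]_(da * db)) : 'M[C]_db :=
  \matrix_(b, b') \sum_(a < da) rho (mxtens_index (a, b)) (mxtens_index (a, b')).
Definition ptraceB {da db} (rho : 'M[C]_(da * db)) : 'M[C]_da :=
  \matrix_(a, a') \sum_(b < db) rho (mxtens_index (a, b)) (mxtens_index (a', b)).

Definition max_entangled d (psi : 'cV[C]_(d * d)) : Prop :=
  ptraceA (ketbra psi) = (d%:R)^-1 *: 1%:M /\
  ptraceB (ketbra psi) = (d%:R)^-1 *: 1%:M.

Definition kraus {m din dout} (K : 'I_m -> 'M[C]_(dout, din)) : Prop :=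
  \sum_(j < m) adjmx (K j) *m K j = 1%:M.

(* Finite-round LOCC protocols for discriminating n states.  At each node one
   party (Alice or Bob) performs a local measurement with Kraus operators
   (possibly changing the dimension of its own system, e.g. adjoining an
   ancilla); the classical outcome is broadcast and the rest of the protocol
   may depend on it (tree structure). *)
Inductive locc (n : nat) : nat -> nat -> Type :=
| Guess da db (g : 'I_n) : locc n da db
| AliceM da db m da' (K : 'I_m -> 'M[C]_(da', da))
    (next : 'I_m -> locc n da' db) : locc n da db
| BobM da db m db' (L : 'I_m -> 'M[C]_(db', db))
    (next : 'I_m -> locc n da db') : locc n da db.

Fixpoint locc_valid n da db (P : locc n da db) : Prop :=
  match P with
  | Guess _ _ _ => True
  | AliceM _ _ _ _ K next => kraus K /\ forall k, locc_valid (next k)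
  | BobM _ _ _ _ L next => kraus L /\ forall k, locc_valid (next k)
  end.

(* [locc_identifies P i v]: running P on the (unnormalised) state v, every
   branch reached with nonzero probability ends with the guess i. *)
Fixpoint locc_identifies n da db (P : locc n da db) (i : 'I_n)
  : 'cV[C]_(da * db) -> Prop :=
  match P in locc _ da db return 'cV[C]_(da * db) -> Prop with
  | Guess _ _ g => fun v => v = 0 \/ g = i
  | AliceM _ db _ _ K next => fun v =>
      forall k, locc_identifies (next k) i ((K k *t (1%:M : 'M[C]_db)) *m v)
  | BobM da _ _ _ L next => fun v =>
      forall k, locc_identifies (next k) i (((1%:M : 'M[C]_da) *t L k) *m v)
  end.

Definition locc_distinguishable n da db (phi : 'I_n -> 'cV[C]_(da * db)) : Prop :=
  exists P : locc n da db, locc_valid P /\ forall i, locc_identifies P i (phi i).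

End QDefs.

(* Write a state of C^p (x) C^q as its p x q coefficient matrix X, so that
   (A (x) B) x has coefficient matrix A X B^T and Alice's reduced state is
   X X^*.  For local operators A, B (the accumulated Kraus operators along a
   branch of the protocol) compare
     F(Z) = sum_i <(A (x) B) psi_i, (A (x) B Z) psi_i>,
     G(Z) = (1/d) tr(A^* A) tr(B^* B Z).
   Both are additive over the outcomes of any local measurement, by
   completeness of its Kraus operators.  On a leaf only one psi_i survives, and
   there F(1) <= G(1) by Cauchy-Schwarz, with equality only when F = G.
   Summing up the tree, the same holds at the root A = K_alpha, B = 1, where
   F(1) = G(1) = tr(K_alpha^* K_alpha); hence F(Z) = G(Z) for every Z, which
   says that Bob's averaged reduced state is maximally mixed. *)

From HB Require Import structures.
From mathcomp Require Import all_boot all_order all_algebra.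
From mathcomp Require Import mxtens ring.
Import Order.TTheory GRing.Theory Num.Theory.
Set Implicit Arguments. Unset Strict Implicit. Unset Printing Implicit Defensive.
Local Open Scope ring_scope.

Section Adjoint.
Variable C : numClosedFieldType.

Lemma adjmxE m n (X : 'M[C]_(m, n)) i j : adjmx X i j = (X j i)^*.
Proof. by rewrite !mxE. Qed.

Lemma adjmxM m n p (X : 'M[C]_(m, n)) (Y : 'M_(n, p)) :
  adjmx (X *m Y) = adjmx Y *m adjmx X.
Proof. by rewrite /adjmx map_mxM trmx_mul. Qed.

Lemma adjmx_tr m n (X : 'M[C]_(m, n)) : adjmx X^T = (adjmx X)^T.
Proof. by apply/matrixP=> i j; rewrite !mxE. Qed.

Lemma adjmx0 m n : adjmx (0 : 'M[C]_(m, n)) = 0.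
Proof. by rewrite /adjmx map_mx0 trmx0. Qed.

Lemma adjmx1 n : adjmx (1%:M : 'M[C]_n) = 1%:M.
Proof. by apply/matrixP=> i j; rewrite !mxE rmorphMn rmorph1 eq_sym. Qed.

Lemma adjmxZ m n a (X : 'M[C]_(m, n)) : adjmx (a *: X) = a^* *: adjmx X.
Proof. by apply/matrixP=> i j; rewrite !mxE rmorphM. Qed.

Lemma mxtrace_adjE m n (X : 'M[C]_(m, n)) :
  \tr (adjmx X *m X) = \sum_j \sum_i X i j * (X i j)^*.
Proof.
apply: eq_bigr => j _; rewrite mxE.
by apply: eq_bigr => i _; rewrite !mxE mulrC.
Qed.

Lemma mxtrace_adj_ge0 m n (X : 'M[C]_(m, n)) : 0 <= \tr (adjmx X *m X).
Proof.
by rewrite mxtrace_adjE; do 2!apply: sumr_ge0 => ? _; exact: mul_conjC_ge0.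
Qed.

Lemma mxtrace_adj_eq0 m n (X : 'M[C]_(m, n)) :
  (\tr (adjmx X *m X) == 0) = (X == 0).
Proof.
apply/idP/eqP=> [|->]; last by rewrite adjmx0 mul0mx mxtrace0.
rewrite mxtrace_adjE => /eqP X0; apply/matrixP=> i j; rewrite mxE.
have ge0 j' i' : 0 <= X i' j' * (X i' j')^* by exact: mul_conjC_ge0.
have := psumr_eq0P (fun j' _ => sumr_ge0 _ (fun i' _ => ge0 j' i')) X0 (i := j) isT.
move/(psumr_eq0P (fun i' _ => ge0 j i'))/(_ i isT).
by move/eqP; rewrite mul_conjC_eq0 => /eqP.
Qed.

Lemma mxtrace_delta_mx n (S : 'M[C]_n) i j : \tr (S *m delta_mx j i) = S i j.
Proof.
rewrite /mxtrace (bigD1 i) //= big1 ?addr0 => [|k nk]; rewrite !mxE.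
  rewrite (bigD1 j) //= big1 ?addr0 => [|l nl]; first by rewrite !mxE !eqxx mulr1.
  by rewrite !mxE (negbTE nl) mulr0.
by apply: big1 => l _; rewrite !mxE (negbTE nk) andbF mulr0.
Qed.

Lemma mxtrace_mulI n (S T : 'M[C]_n) :
  (forall Z, \tr (S *m Z) = \tr (T *m Z)) -> S = T.
Proof.
by move=> ST; apply/matrixP=> i j; rewrite -!(mxtrace_delta_mx _ i j) ST.
Qed.

End Adjoint.

Section CoefficientMatrix.
Variable C : numClosedFieldType.

Definition coefmx m n (x : 'cV[C]_(m * n)) : 'M[C]_(m, n) :=
  \matrix_(a, b) x (mxtens_index (a, b)) 0.

Lemma big_mxtens_index m n (F : 'I_(m * n) -> C) :
  \sum_k F k = \sum_a \sum_b F (mxtens_index (a, b)).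
Proof.
rewrite pair_big /= (reindex (@mxtens_index m n)) /=; last first.
  by exists (@mxtens_unindex m n) => x _; rewrite (mxtens_indexK, mxtens_unindexK).
by apply: eq_bigr => -[a b].
Qed.

Lemma coefmx0 m n : coefmx (0 : 'cV[C]_(m * n)) = 0.
Proof. by apply/matrixP=> a b; rewrite !mxE. Qed.

Lemma coefmx_tensmx da db m n (A : 'M[C]_(da, m)) (B : 'M[C]_(db, n)) x :
  coefmx ((A *t B) *m x) = A *m coefmx x *m B^T.
Proof.
apply/matrixP=> r s; rewrite !mxE big_mxtens_index exchange_big /=.
apply: eq_bigr => b _; rewrite !mxE mulr_suml; apply: eq_bigr => a _.
by rewrite tensmxE !mxE mulrAC.
Qed.

Lemma inner_coefmx m n (u v : 'cV[C]_(m * n)) :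
  inner u v = \tr (adjmx (coefmx u) *m coefmx v).
Proof.
rewrite /inner /mxtrace !mxE big_mxtens_index exchange_big /=.
by apply: eq_bigr => b _; rewrite !mxE; apply: eq_bigr => a _; rewrite !mxE.
Qed.

Lemma ptraceB_ketbra m n (x : 'cV[C]_(m * n)) :
  ptraceB (ketbra x) = coefmx x *m adjmx (coefmx x).
Proof.
apply/matrixP=> a a'; rewrite !mxE; apply: eq_bigr => b _.
by rewrite !mxE big_ord1 !mxE.
Qed.

Lemma ptraceA_ketbra m n (x : 'cV[C]_(m * n)) :
  ptraceA (ketbra x) = (adjmx (coefmx x) *m coefmx x)^T.
Proof.
apply/matrixP=> b b'; rewrite !mxE; apply: eq_bigr => a _.
by rewrite !mxE big_ord1 !mxE mulrC.
Qed.

Lemma ptraceA_ketbraZ m n s (x : 'cV[C]_(m * n)) :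
  ptraceA (ketbra (s *: x)) = (s * s^*) *: ptraceA (ketbra x).
Proof.
rewrite /ketbra adjmxZ -scalemxAl -scalemxAr scalerA.
by apply/matrixP=> b b'; rewrite !mxE mulr_sumr; apply: eq_bigr => a _; rewrite mxE.
Qed.

Lemma inner_tensmx1 m n (x : 'cV[C]_(m * n)) (Z : 'M[C]_n) :
  inner x ((1%:M *t Z) *m x) = \tr (ptraceA (ketbra x) *m Z).
Proof.
rewrite inner_coefmx coefmx_tensmx mul1mx ptraceA_ketbra -[RHS]mxtrace_tr.
by rewrite trmx_mul trmxK mulmxA mxtrace_mulC.
Qed.

End CoefficientMatrix.

Section Lagrange.
Variable C : numClosedFieldType.

Definition sum4 q p s (F : 'I_q -> 'I_q -> 'I_p -> 'I_s -> C) :=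
  \sum_a \sum_b \sum_r \sum_t F a b r t.

Lemma sum4D q p s (F G : 'I_q -> 'I_q -> 'I_p -> 'I_s -> C) :
  sum4 F + sum4 G = sum4 (fun a b r t => F a b r t + G a b r t).
Proof.
rewrite /sum4 -big_split; apply: eq_bigr => a _.
rewrite -big_split; apply: eq_bigr => b _.
by rewrite -big_split; apply: eq_bigr => r _; rewrite -big_split.
Qed.

Lemma sum4N q p s (F : 'I_q -> 'I_q -> 'I_p -> 'I_s -> C) :
  - sum4 F = sum4 (fun a b r t => - F a b r t).
Proof.
rewrite /sum4 -sumrN; apply: eq_bigr => a _.
rewrite -sumrN; apply: eq_bigr => b _.
by rewrite -sumrN; apply: eq_bigr => r _; rewrite -sumrN.
Qed.

Lemma sum4C q p s (F : 'I_q -> 'I_q -> 'I_p -> 'I_s -> C) :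
  sum4 F = sum4 (fun a b r t => F b a r t).
Proof. exact: exchange_big. Qed.

Lemma sum4_eq0 q p s (F : 'I_q -> 'I_q -> 'I_p -> 'I_s -> C) :
  (forall a b r t, 0 <= F a b r t) ->
  sum4 F = 0 -> forall a b r t, F a b r t = 0.
Proof.
move=> ge0 F0 a b r t.
have ge3 a' b' r' : 0 <= \sum_t' F a' b' r' t' by apply: sumr_ge0.
have ge2 a' b' : 0 <= \sum_r' \sum_t' F a' b' r' t' by apply: sumr_ge0.
have ge1 a' : 0 <= \sum_b' \sum_r' \sum_t' F a' b' r' t' by apply: sumr_ge0.
move/(psumr_eq0P (fun a' _ => ge1 a'))/(_ a isT): F0.
move/(psumr_eq0P (fun b' _ => ge2 a b'))/(_ b isT).
move/(psumr_eq0P (fun r' _ => ge3 a b r'))/(_ r isT).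
by move/(psumr_eq0P (fun t' _ => ge0 a b r t'))/(_ t isT).
Qed.

Section TraceInequality.
Variables (p q s : nat) (G : 'M[C]_(p, q)) (H : 'M[C]_(q, s)).

Let lagrange_term a b r t := G r a * (H b t)^* - G r b * (H a t)^*.

(* [tr (H H^* G^* G)] is the squared Frobenius norm of [G H]: this is
   Lagrange's identity behind [|G H| <= |G| |H|]. *)
Lemma lagrange_identity :
  (\tr (adjmx G *m G) * \tr (H *m adjmx H)
     - \tr (H *m adjmx H *m (adjmx G *m G))) *+ 2 =
  sum4 (fun a b r t => lagrange_term a b r t * (lagrange_term a b r t)^*).
Proof.
have -> : \tr (adjmx G *m G) * \tr (H *m adjmx H) =
    sum4 (fun a b r t => ((G r a)^* * G r a) * (H b t * (H b t)^*)).
  rewrite /sum4 /mxtrace mulr_suml; apply: eq_bigr => a _.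
  rewrite !mxE mulr_sumr; apply: eq_bigr => b _.
  rewrite !mxE mulr_suml; apply: eq_bigr => r _.
  by rewrite !mxE mulr_sumr; apply: eq_bigr => t _; rewrite !mxE.
have -> : \tr (H *m adjmx H *m (adjmx G *m G)) =
    sum4 (fun a b r t => (H a t * (H b t)^*) * ((G r b)^* * G r a)).
  rewrite /sum4 /mxtrace; apply: eq_bigr => a _.
  rewrite !mxE; apply: eq_bigr => b _.
  rewrite !mxE mulr_suml exchange_big /=; apply: eq_bigr => r _.
  by rewrite !mxE mulr_sumr; apply: eq_bigr => t _; rewrite !mxE.
rewrite mulrnBl !mulr2n opprD [X in _ + X + _]sum4C [X in _ + (_ - X)]sum4C.
rewrite !sum4N !sum4D; do 4!apply: eq_bigr => ? _.
rewrite /lagrange_term rmorphB /= !rmorphM /= !conjCK; ring.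
Qed.

Lemma mxtrace_adj_mul_le :
  \tr (H *m adjmx H *m (adjmx G *m G)) <= \tr (adjmx G *m G) * \tr (H *m adjmx H).
Proof.
rewrite -subr_ge0 -(pmulrn_lge0 _ (isT : 0 < 2)%N) lagrange_identity.
by do 4!apply: sumr_ge0 => ? _; exact: mul_conjC_ge0.
Qed.

Lemma mxtrace_adj_mul_eq :
  \tr (H *m adjmx H *m (adjmx G *m G)) = \tr (adjmx G *m G) * \tr (H *m adjmx H) ->
  H *m adjmx H *m (adjmx G *m G) = \tr (adjmx G *m G) *: (H *m adjmx H).
Proof.
move=> eq_tr; have := lagrange_identity; rewrite eq_tr subrr mul0rn.
move/esym/(sum4_eq0 (fun a b r t => mul_conjC_ge0 _)) => term0.
have GH r t a b : G r a * (H b t)^* = G r b * (H a t)^*.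
  by apply/eqP; rewrite -subr_eq0 -mul_conjC_eq0; apply/eqP; exact: term0.
apply/matrixP=> x y; rewrite !mxE /mxtrace mulr_suml.
apply: eq_bigr => k _; rewrite !mxE !big_distrlr [RHS]exchange_big /=.
apply: eq_bigr => t _; apply: eq_bigr => r _; rewrite !adjmxE.
transitivity (H x t * (G r k)^* * (G r y * (H k t)^*)); first by ring.
by rewrite GH; ring.
Qed.

End TraceInequality.
End Lagrange.

Section Kraus.
Variable C : numClosedFieldType.

Lemma kraus_mxtrace_suml m p p' s (K : 'I_m -> 'M[C]_(p', p)) (V W : 'M[C]_(p, s)) :
  kraus K -> \sum_k \tr (adjmx (K k *m V) *m (K k *m W)) = \tr (adjmx V *m W).
Proof.
move=> HK; have split_adj k : adjmx (K k *m V) *m (K k *m W) =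
    adjmx V *m (adjmx (K k) *m K k) *m W by rewrite adjmxM !mulmxA.
under eq_bigr do rewrite split_adj.
by rewrite -linear_sum -mulmx_suml -mulmx_sumr HK mulmx1.
Qed.

Lemma kraus_mxtrace_sumr m p s s' (L : 'I_m -> 'M[C]_(s', s)) (V W : 'M[C]_(p, s)) :
  kraus L ->
  \sum_k \tr (adjmx (V *m (L k)^T) *m (W *m (L k)^T)) = \tr (adjmx V *m W).
Proof.
move=> HL; have split_adj k : \tr (adjmx (V *m (L k)^T) *m (W *m (L k)^T)) =
    \tr (adjmx V *m W *m (adjmx (L k) *m L k)^T).
  by rewrite adjmxM adjmx_tr -mulmxA mxtrace_mulC trmx_mul !mulmxA.
under eq_bigr do rewrite split_adj.
by rewrite -linear_sum -mulmx_sumr -(linear_sum (@trmx C _ _)) HL /= trmx1 mulmx1.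
Qed.

End Kraus.

Section LoccDominated.
Variable C : numClosedFieldType.

Lemma locc_identifiesZ n da db (P : locc C n da db) i x s :
  locc_identifies P i x -> locc_identifies P i (s *: x).
Proof.
elim: P x => [? ? g | ? ? ? ? K next IH | ? ? ? ? L next IH] x /=.
- by case=> [->|->]; [left; rewrite scaler0 | right].
- by move=> idx k; rewrite -scalemxAr; apply: IH.
- by move=> idx k; rewrite -scalemxAr; apply: IH.
Qed.

Definition dominated k (f g : 'M[C]_k -> C) :=
  f 1%:M <= g 1%:M /\ (f 1%:M = g 1%:M -> f =1 g).

Lemma dominated_sum k m (f g : 'I_m -> 'M[C]_k -> C) (f0 g0 : 'M[C]_k -> C) :
  (forall Z, f0 Z = \sum_j f j Z) -> (forall Z, g0 Z = \sum_j g j Z) ->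
  (forall j, dominated (f j) (g j)) -> dominated f0 g0.
Proof.
move=> f0E g0E fg; rewrite /dominated !f0E !g0E; split.
  by apply: ler_sum => j _; case: (fg j).
move=> eq1 Z; rewrite f0E g0E; apply: eq_bigr => j _; apply: (fg j).2.
have ge0 j' : 0 <= g j' 1%:M - f j' 1%:M by rewrite subr_ge0; case: (fg j').
have := psumr_eq0P (fun j' _ => ge0 j') _ (i := j) isT.
by rewrite sumrB eq1 subrr => /(_ erefl)/eqP; rewrite subr_eq0 => /eqP.
Qed.

Variables (dA dB n : nat) (psi : 'I_n -> 'cV[C]_(dA * dB)) (c : C).
Hypothesis mixedA : forall i, ptraceB (ketbra (psi i)) = c *: 1%:M.

Definition branch_weight da db (A : 'M[C]_(da, dA)) (B : 'M[C]_(db, dB)) Z :=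
  \sum_i inner ((A *t B) *m psi i) ((A *t (B *m Z)) *m psi i).

Definition branch_bound da db (A : 'M[C]_(da, dA)) (B : 'M[C]_(db, dB)) Z :=
  c * \tr (adjmx A *m A) * \tr (adjmx B *m B *m Z).

Lemma mxtrace_adj_mixed i da (A : 'M[C]_(da, dA)) :
  \tr (adjmx (A *m coefmx (psi i)) *m (A *m coefmx (psi i))) =
  c * \tr (adjmx A *m A).
Proof.
rewrite adjmxM !mulmxA mxtrace_mulC !mulmxA -ptraceB_ketbra mixedA.
by rewrite -!scalemxAl mul1mx mxtraceZ.
Qed.

Lemma branch_weightE da db (A : 'M[C]_(da, dA)) (B : 'M[C]_(db, dB)) Z :
  branch_weight A B Z = \sum_i \tr (adjmx (A *m coefmx (psi i) *m B^T) *m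
                                    (A *m coefmx (psi i) *m Z^T *m B^T)).
Proof.
by rewrite /branch_weight; apply: eq_bigr => i _; rewrite inner_coefmx !coefmx_tensmx trmx_mul !mulmxA.
Qed.

Section Measurement.
Variables (da db m : nat) (A : 'M[C]_(da, dA)) (B : 'M[C]_(db, dB)).

Lemma branch_weight_alice da' (K : 'I_m -> 'M[C]_(da', da)) Z :
  kraus K -> \sum_k branch_weight (K k *m A) B Z = branch_weight A B Z.
Proof.
move=> HK; under eq_bigr do rewrite branch_weightE.
rewrite exchange_big branch_weightE; apply: eq_bigr => i _ /=.
rewrite -(kraus_mxtrace_suml _ _ HK); apply: eq_bigr => k _.
by rewrite !mulmxA.
Qed.

Lemma branch_weight_bob db' (L : 'I_m -> 'M[C]_(db', db)) Z :
  kraus L -> \sum_k branch_weight A (L k *m B) Z = branch_weight A B Z.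
Proof.
move=> HL; under eq_bigr do rewrite branch_weightE.
rewrite exchange_big branch_weightE; apply: eq_bigr => i _ /=.
rewrite -(kraus_mxtrace_sumr _ _ HL); apply: eq_bigr => k _.
by rewrite !trmx_mul !mulmxA.
Qed.

Lemma branch_bound_alice da' (K : 'I_m -> 'M[C]_(da', da)) Z :
  kraus K -> \sum_k branch_bound (K k *m A) B Z = branch_bound A B Z.
Proof.
by move=> HK; rewrite -mulr_suml -mulr_sumr (kraus_mxtrace_suml _ _ HK).
Qed.

Lemma branch_bound_bob db' (L : 'I_m -> 'M[C]_(db', db)) Z :
  kraus L -> \sum_k branch_bound A (L k *m B) Z = branch_bound A B Z.
Proof.
move=> HL; rewrite -mulr_sumr; under eq_bigr do rewrite -!mulmxA.
by rewrite (kraus_mxtrace_suml _ _ HL) mulmxA.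
Qed.

End Measurement.

Lemma dominated_leaf da db (A : 'M[C]_(da, dA)) (B : 'M[C]_(db, dB)) g :
  (forall i, (A *t B) *m psi i = 0 \/ g = i) ->
  dominated (branch_weight A B) (branch_bound A B).
Proof.
move=> survivor; set G := A *m coefmx (psi g); set H := B^T.
have weightE Z : branch_weight A B Z =
    \tr (Z^T *m (H *m adjmx H *m (adjmx G *m G))).
  rewrite branch_weightE (bigD1 g) //= big1 ?addr0 => [|i ne_ig].
    by rewrite adjmxM !mulmxA mxtrace_mulC !mulmxA mxtrace_mulC !mulmxA.
  case: (survivor i) => [v0|eq_gi]; last by rewrite eq_gi eqxx in ne_ig.
  by rewrite -coefmx_tensmx v0 coefmx0 adjmx0 mul0mx mxtrace0.
have boundE Z : branch_bound A B Z =
    \tr (adjmx G *m G) * \tr (Z^T *m (H *m adjmx H)).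
  rewrite /branch_bound mxtrace_adj_mixed; congr (_ * _).
  by rewrite -[LHS]mxtrace_tr !trmx_mul -adjmx_tr mulmxA.
rewrite /dominated weightE boundE trmx1 !mul1mx; split.
  exact: mxtrace_adj_mul_le.
by move/mxtrace_adj_mul_eq=> GH Z; rewrite weightE boundE GH -scalemxAr mxtraceZ.
Qed.

Lemma locc_dominated da db (P : locc C n da db) : locc_valid P ->
  forall (A : 'M[C]_(da, dA)) (B : 'M[C]_(db, dB)),
  (forall i, locc_identifies P i ((A *t B) *m psi i)) ->
  dominated (branch_weight A B) (branch_bound A B).
Proof.
elim: P => [? ? g | ? ? m ? K next IH | ? ? m ? L next IH] /=.
- move=> _ A B ident; apply: (@dominated_leaf _ _ A B g) => i.
  by case: (ident i) => [|->]; [left | right].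
- move=> [HK valid] A B ident.
  apply: (dominated_sum (f := fun k => branch_weight (K k *m A) B)
                        (g := fun k => branch_bound (K k *m A) B)).
  + by move=> Z; rewrite (branch_weight_alice _ _ _ HK).
  + by move=> Z; rewrite (branch_bound_alice _ _ _ HK).
  move=> k; apply: (IH k (valid k)) => i.
  by have := ident i k; rewrite mulmxA tensmx_mul mul1mx.
- move=> [HL valid] A B ident.
  apply: (dominated_sum (f := fun k => branch_weight A (L k *m B))
                        (g := fun k => branch_bound A (L k *m B))).
  + by move=> Z; rewrite (branch_weight_bob _ _ _ HL).
  + by move=> Z; rewrite (branch_bound_bob _ _ _ HL).
  move=> k; apply: (IH k (valid k)) => i.
  by have := ident i k; rewrite mulmxA tensmx_mul mul1mx.
Qed.

Lemma locc_sum_ptraceA da (A : 'M[C]_(da, dA)) (P : locc C n da dB) :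
  n = dB -> locc_valid P ->
  (forall i, locc_identifies P i ((A *t 1%:M) *m psi i)) ->
  \sum_i ptraceA (ketbra ((A *t 1%:M) *m psi i)) =
  (c * \tr (adjmx A *m A)) *: 1%:M.
Proof.
move=> n_dB valid ident; have [_ eq_root] := locc_dominated valid ident.
have weightE Z : branch_weight A 1%:M Z =
    \tr ((\sum_i ptraceA (ketbra ((A *t 1%:M) *m psi i))) *m Z).
  rewrite /branch_weight mulmx_suml linear_sum; apply: eq_bigr => i _ /=.
  by rewrite -inner_tensmx1 mulmxA tensmx_mul !mul1mx mulmx1.
have boundE Z : branch_bound A 1%:M Z = \tr ((c * \tr (adjmx A *m A)) *: 1%:M *m Z).
  by rewrite /branch_bound adjmx1 !mul1mx -scalemxAl mul1mx mxtraceZ.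
apply: mxtrace_mulI => Z; rewrite -weightE -boundE; apply: eq_root.
rewrite /branch_weight /branch_bound; under eq_bigr do rewrite mulmx1.
under eq_bigr do rewrite inner_coefmx coefmx_tensmx trmx1 mulmx1 mxtrace_adj_mixed.
by rewrite sumr_const card_ord adjmx1 !mulmx1 mxtrace1 mulr_natr n_dB.
Qed.

End LoccDominated.

Unset Implicit Arguments.
Set Strict Implicit.

Theorem corollary1 (C : numClosedFieldType) (d : nat)
  (psi : 'I_d -> 'cV[C]_(d * d))
  (Hme : forall i, max_entangled (psi i))
  (Horth : forall i j, i != j -> inner (psi i) (psi j) = 0)
  (m : nat) (K : 'I_m -> 'M[C]_d) (HK : kraus K)
  (alpha : 'I_m) (Halpha : K alpha != 0) :
  let psi_a := fun i : 'I_d =>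
    (vnorm ((K alpha *t (1%:M : 'M[C]_d)) *m psi i))^-1 *:
      ((K alpha *t (1%:M : 'M[C]_d)) *m psi i) in
  let rhoB := (d%:R)^-1 *: \sum_(i < d) ptraceA (ketbra (psi_a i)) in
  locc_distinguishable psi_a ->
  rhoB = (d%:R)^-1 *: 1%:M.
Proof.
move=> psi_a rhoB [P [valid ident]].
set Ka := K alpha; set x := d%:R^-1 * \tr (adjmx Ka *m Ka).
pose v i := (Ka *t (1%:M : 'M[C]_d)) *m psi i.
have mixedA i : ptraceB (ketbra (psi i)) = d%:R^-1 *: 1%:M := (Hme i).2.
have d_gt0 : (0 < d)%N.
  apply: contraNT Halpha; rewrite -leqNgt leqn0 => /eqP d0.
  by apply/eqP/matrixP=> i; move: (ltn_ord i); rewrite [in X in (_ < X)%N]d0.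
have x_gt0 : 0 < x.
  by rewrite mulr_gt0 ?invr_gt0 ?ltr0n // lt_def mxtrace_adj_eq0 Halpha mxtrace_adj_ge0.
have vnorm_v i : vnorm (v i) = sqrtC x.
  by rewrite /vnorm inner_coefmx coefmx_tensmx trmx1 mulmx1 (mxtrace_adj_mixed mixedA).
have ident_v i : locc_identifies P i (v i).
  have := locc_identifiesZ (vnorm (v i)) (ident i).
  by rewrite /psi_a -/(v i) scalerA vnorm_v mulfV ?scale1r // sqrtC_eq0 gt_eqF.
have sum_rho := locc_sum_ptraceA mixedA erefl valid ident_v.
rewrite /rhoB; congr (_ *: _).
transitivity (\sum_i x^-1 *: ptraceA (ketbra (v i))).
  apply: eq_bigr => i _; rewrite /psi_a -/(v i) ptraceA_ketbraZ vnorm_v.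
  by rewrite geC0_conj ?invr_ge0 ?sqrtC_ge0 ?ltW // -invfM -expr2 sqrtCK.
by rewrite -scaler_sumr sum_rho -/x scalerA mulVf ?scale1r // gt_eqF.
Qed.
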